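(* Let $(\mathbb{P},\le,f)$ be a forcing property for $\mathcal{L}_A$, $p\in\mathbb{P}$ and $\varphi\in\mathcal{L}_A^s(C)$. Then $$F^w_p(\varphi)=\sup_{q\le p}F^w_q(\varphi)=\sup_{q\le p}\inf_{q'\le q}F^w_{q'}(\varphi).$$
   Context: $\mathcal{L}$ is a countable continuous signature; formulas of $\mathcal{L}_{\omega_1,\omega}$ are built from atomic formulas using $\neg$, $\tfrac12$, $\dotplus$, countable conjunctions $\bigwedge$ and $\inf_x$. $\mathcal{L}_A$ is a countable fragment, $C=\{c_i:i<\omega\}$ new constants, $\mathcal{L}_A(C)$ the smallest countable fragment of $\mathcal{L}_{\omega_1,\omega}(C)$ containing $\mathcal{L}_A$, $\mathcal{L}_A^s(C)$ its sentences, $\mathcal{L}_A^{as}(C)$ its atomic sentences, $\mathcal{T}(C)$ closed terms. A forcing property $(\mathbb{P},\le,f)$: poset with $f_p\colon\mathcal{L}_A^{as}(C)\to[0,1]$ such that (1) $p\le q\Rightarrow f_p\le f_q$; (2) for every $p$, $\varepsilon>0$, $\tau,\sigma\in\mathcal{T}(C)$, atomic $\varphi(x)$ there are $q\le p$, $c\in C$ with $f_q(d(\tau,c))<\varepsilon$, $f_q(d(\tau,\sigma))<f_p(d(\sigma,\tau))+\varepsilon$, and if $f_p(d(\tau,\sigma))<\delta_{\varphi,x}(\varepsilon)$ then $f_q(\varphi(\sigma))<f_p(\varphi(\tau))+\varepsilon$. $F_p$: $f_p$ on atomics; $F_p(\neg\varphi)=1-\inf_{q\le p}F_q(\varphi)$;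 $F_p(\tfrac12\varphi)=\tfrac12F_p(\varphi)$; $F_p(\varphi\dotplus\psi)=\min(F_p(\varphi)+F_p(\psi),1)$; $F_p(\bigwedge\Phi)=\inf_{\varphi\in\Phi}F_p(\varphi)$; $F_p(\inf_x\varphi)=\inf_{c\in C}F_p(\varphi(c))$. $F^w_p(\varphi)=\sup_{q\le p}\inf_{q'\le q}F_{q'}(\varphi)$. *)

From HB Require Import structures.
From mathcomp Require Import all_boot all_order all_algebra.
From mathcomp Require Import all_classical all_reals.
Set Implicit Arguments.
Unset Strict Implicit.
Unset Printing Implicit Defensive.
Import Order.TTheory GRing.Theory Num.Theory.
Local Open Scope ring_scope.
Local Open Scope classical_set_scope.

(* Function / predicate symbols form countable types; each symbol      *)
(* comes with moduli of uniform continuity, one per argument place.    *)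
Record signature (R : realType) := Signature {
  Fsym : countType;
  Psym : countType;
  far  : Fsym -> nat;
  par  : Psym -> nat;
  fmod : forall f : Fsym, 'I_(far f) -> R -> R;
  pmod : forall P : Psym, 'I_(par P) -> R -> R
}.

Section Syntax.
Variables (R : realType) (L : signature R).

(* Terms of L(C): variables x_n, new constants c_n (n : nat), applications. *)
Inductive term : Type :=
| TVar   : nat -> term
| TConst : nat -> term
| TApp   : forall f : Fsym L, ('I_(far f) -> term) -> term.

Inductive atom : Type :=
| ADist : term -> term -> atom
| APred : forall P : Psym L, ('I_(par P) -> term) -> atom.

(* Formulas of L_{omega1,omega}(C): atoms, ¬, 1/2, ∔, countable
   (nonempty, nat-indexed) conjunctions, inf_x. *)
Inductive formula : Type :=
| FAtom : atom -> formula
| FNeg  : formula -> formula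
| FHalf : formula -> formula
| FPlus : formula -> formula -> formula
| FConj : (nat -> formula) -> formula
| FInf  : nat -> formula -> formula.

Fixpoint tfree (t : term) (x : nat) : Prop :=
  match t with
  | TVar y => y = x
  | TConst _ => False
  | TApp f a => exists i, tfree (a i) x
  end.

Definition afree (a : atom) (x : nat) : Prop :=
  match a with
  | ADist t1 t2 => tfree t1 x \/ tfree t2 x
  | APred P ts => exists i, tfree (ts i) x
  end.

Fixpoint ffree (phi : formula) (x : nat) : Prop :=
  match phi with
  | FAtom a => afree a x
  | FNeg p | FHalf p => ffree p x
  | FPlus p q => ffree p x \/ ffree q x
  | FConj Phi => exists n, ffree (Phi n) x
  | FInf y p => y <> x /\ ffree p x
  end.

Fixpoint fbound (phi : formula) (x : nat) : Prop :=
  match phi with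
  | FAtom _ => False
  | FNeg p | FHalf p => fbound p x
  | FPlus p q => fbound p x \/ fbound q x
  | FConj Phi => exists n, fbound (Phi n) x
  | FInf y p => y = x \/ fbound p x
  end.

(* no constant from C occurs (i.e. a term/formula of L rather than L(C)) *)
Fixpoint tnoC (t : term) : Prop :=
  match t with
  | TVar _ => True
  | TConst _ => False
  | TApp f a => forall i, tnoC (a i)
  end.

Definition anoC (a : atom) : Prop :=
  match a with
  | ADist t1 t2 => tnoC t1 /\ tnoC t2
  | APred P ts => forall i, tnoC (ts i)
  end.

Fixpoint fnoC (phi : formula) : Prop :=
  match phi with
  | FAtom a => anoC a
  | FNeg p | FHalf p => fnoC p
  | FPlus p q => fnoC p /\ fnoC q
  | FConj Phi => forall n, fnoC (Phi n)
  | FInf _ p => fnoC p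
  end.

Definition closed_term (t : term) : Prop := forall x, ~ tfree t x.
Definition closed_atom (a : atom) : Prop := forall x, ~ afree a x.
Definition sentence (phi : formula) : Prop := forall x, ~ ffree phi x.

Fixpoint tsubst (s : nat -> term) (t : term) : term :=
  match t with
  | TVar y => s y
  | TConst c => TConst c
  | TApp f a => TApp (fun i => tsubst s (a i))
  end.

Definition asubst (s : nat -> term) (a : atom) : atom :=
  match a with
  | ADist t1 t2 => ADist (tsubst s t1) (tsubst s t2)
  | APred P ts => APred (fun i => tsubst s (ts i))
  end.

Definition upd (s : nat -> term) (x : nat) (t : term) : nat -> term :=
  fun y => if y == x then t else s y.

Fixpoint fsubst (x : nat) (t : term) (phi : formula) : formula :=
  match phi with
  | FAtom a => FAtom (asubst (upd TVar x t) a)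
  | FNeg p => FNeg (fsubst x t p)
  | FHalf p => FHalf (fsubst x t p)
  | FPlus p q => FPlus (fsubst x t p) (fsubst x t q)
  | FConj Phi => FConj (fun n => fsubst x t (Phi n))
  | FInf y p => if y == x then FInf y p else FInf y (fsubst x t p)
  end.

Definition conj2 (phi psi : formula) : formula :=
  FConj (fun n => if n == 0%N then phi else psi).

Definition is_fragment (T : term -> Prop) (Lang : formula -> Prop)
    (B : formula -> Prop) : Prop :=
     (forall phi, B phi -> Lang phi)
  /\ (forall a, Lang (FAtom a) -> B (FAtom a))
  /\ (forall phi, B phi -> B (FNeg phi) /\ B (FHalf phi) /\
                            forall x, B (FInf x phi))
  /\ (forall phi psi, B phi -> B psi -> B (FPlus phi psi) /\ B (conj2 phi psi))
  /\ (forall phi, (B (FNeg phi) \/ B (FHalf phi) \/ exists x, B (FInf x phi))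
                   -> B phi)
  /\ (forall phi psi, B (FPlus phi psi) -> B phi /\ B psi)
  /\ (forall Phi, B (FConj Phi) -> forall n, B (Phi n))
  /\ (forall phi x t, B phi -> T t -> (forall y, fbound phi y -> ~ tfree t y) ->
                        B (fsubst x t phi)).

Definition countable_set (B : formula -> Prop) : Prop :=
  exists g : nat -> formula, forall phi, B phi -> exists n, g n = phi.

(* L_A : a countable fragment of L_{omega1,omega} (no constants from C) *)
Definition countable_fragment_L (LA : formula -> Prop) : Prop :=
  is_fragment tnoC fnoC LA /\ countable_set LA.

(* L_A(C) : the smallest countable fragment of L_{omega1,omega}(C) containing L_A *)
Definition LAC (LA : formula -> Prop) (phi : formula) : Prop :=
  forall B, is_fragment (fun _ => True) (fun _ => True) B -> countable_set B ->
    (forall psi, LA psi -> B psi) -> B phi.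

(* Moduli of uniform continuity delta_{t,x}, delta_{phi,x} derived from the
   signature's moduli (1 = no constraint). *)
Fixpoint tdelta (t : term) (x : nat) : R -> R :=
  match t with
  | TVar y => if y == x then id else fun _ => 1
  | TConst _ => fun _ => 1
  | TApp f a => fun e =>
      \big[Num.min/1]_(i < far f) tdelta (a i) x (fmod i (e / (far f)%:R))
  end.

Definition adelta (a : atom) (x : nat) : R -> R :=
  match a with
  | ADist t1 t2 => fun e => Num.min (tdelta t1 x (e / 2)) (tdelta t2 x (e / 2))
  | APred P ts => fun e =>
      \big[Num.min/1]_(i < par P) tdelta (ts i) x (pmod i (e / (par P)%:R))
  end.

End Syntax.

Arguments TVar {R L}.
Arguments TConst {R L}.

Record forcing_property (R : realType) (L : signature R) := ForcingProperty {
  cond : Type;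
  cle : cond -> cond -> Prop;
  cle_refl : forall p, cle p p;
  cle_trans : forall p q r, cle p q -> cle q r -> cle p r;
  cle_anti : forall p q, cle p q -> cle q p -> p = q;
  fval : cond -> atom L -> R;
  fval_range : forall p a, closed_atom a -> 0 <= fval p a <= 1;
  fval_mono : forall p q a, closed_atom a -> cle p q -> fval p a <= fval q a;
  fval_ext : forall p (eps : R) (tau sigma : term L) (phi : atom L) (x : nat),
      0 < eps -> closed_term tau -> closed_term sigma ->
      (forall y, afree phi y -> y = x) ->
      exists q c, [/\ cle q p,
        fval q (ADist tau (TConst c)) < eps,
        fval q (ADist tau sigma) < fval p (ADist sigma tau) + eps &
        (fval p (ADist tau sigma) < adelta phi x eps ->
         fval q (asubst (upd TVar x sigma) phi) <
         fval p (asubst (upd TVar x tau) phi) + eps)]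
}.

Section Forcing.
Variables (R : realType) (L : signature R) (FP : forcing_property L).
Local Notation P := (cond FP).
Local Notation le := (@cle R L FP).

(* F_p(phi) under an assignment [s] of (closed) terms to the free variables;
   the clause for inf_x uses s[x := c] in place of the substitution phi(c). *)
Fixpoint Fenv (phi : formula L) : (nat -> term L) -> P -> R :=
  match phi with
  | FAtom a => fun s p => @fval R L FP p (asubst s a)
  | FNeg psi => fun s p => 1 - inf [set Fenv psi s q | q in [set q | le q p]]
  | FHalf psi => fun s p => Fenv psi s p / 2
  | FPlus psi chi => fun s p => Num.min (Fenv psi s p + Fenv chi s p) 1
  | FConj Phi => fun s p => inf [set Fenv (Phi n) s p | n in [set: nat]]
  | FInf x psi => fun s p =>
      inf [set Fenv psi (upd s x (TConst c)) p | c in [set: nat]]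
  end.

Definition Fp (p : P) (phi : formula L) : R := Fenv phi TVar p.

Definition Fw (p : P) (phi : formula L) : R :=
  sup [set inf [set Fp q' phi | q' in [set q' | le q' q]] | q in [set q | le q p]].

End Forcing.

(* The weak forcing value is W p = sup_{q <= p} G q with G q = inf_{q' <= q} F q'.
   Since G is antitone and W monotone along the order, G q <= G q' <= W q' for
   q' <= q, so G q <= inf_{q' <= q} W q' <= W q <= W p.  Taking suprema over
   q <= p squeezes both right-hand sides to W p; the only analytic input is
   that F_p(phi) lies in [0, 1], which makes every sup and inf well behaved. *)
From HB Require Import structures.
From mathcomp Require Import all_boot all_order all_algebra.
From mathcomp Require Import all_classical all_reals.
From mathcomp Require Import lra.
Set Implicit Arguments.
Unset Strict Implicit.
Unset Printing Implicit Defensive.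
Import Order.TTheory GRing.Theory Num.Theory.
Local Open Scope ring_scope.
Local Open Scope classical_set_scope.

Section ImageSupInf.
Variables (R : realType) (T : Type) (A : set T) (f : T -> R) (a b : R).
Hypothesis f_itv : forall q, A q -> a <= f q <= b.

Lemma le_sup_image q : A q -> f q <= sup (f @` A).
Proof.
move=> Aq; apply: ub_le_sup; last by exists q.
by exists b => _ [r Ar <-]; case/andP: (f_itv Ar).
Qed.

Lemma ge_inf_image q : A q -> inf (f @` A) <= f q.
Proof.
move=> Aq; apply: ge_inf; last by exists q.
by exists a => _ [r Ar <-]; case/andP: (f_itv Ar).
Qed.

Lemma ge_sup_image c : A !=set0 -> (forall q, A q -> f q <= c) ->
  sup (f @` A) <= c.
Proof.
move=> [q Aq] fc; apply: ge_sup; first by exists (f q), q.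
by move=> _ [r Ar <-]; exact: fc.
Qed.

Lemma le_inf_image c : A !=set0 -> (forall q, A q -> c <= f q) ->
  c <= inf (f @` A).
Proof.
move=> [q Aq] cf; apply: lb_le_inf; first by exists (f q), q.
by move=> _ [r Ar <-]; exact: cf.
Qed.

Lemma sup_image_itv : A !=set0 -> a <= sup (f @` A) <= b.
Proof.
move=> [q Aq]; apply/andP; split; last first.
  by apply: ge_sup_image; [exists q | move=> r /f_itv /andP[]].
apply: le_trans (le_sup_image Aq); by case/andP: (f_itv Aq).
Qed.

Lemma inf_image_itv : A !=set0 -> a <= inf (f @` A) <= b.
Proof.
move=> [q Aq]; apply/andP; split.
  by apply: le_inf_image; [exists q | move=> r /f_itv /andP[]].
apply: le_trans (ge_inf_image Aq) _; by case/andP: (f_itv Aq).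
Qed.

End ImageSupInf.

Section SupInfBelow.
Variables (R : realType) (T : Type) (le : T -> T -> Prop).
Hypotheses (refl_le : forall p, le p p)
           (trans_le : forall p q r, le p q -> le q r -> le p r).

Definition below (p : T) : set T := [set q | le q p].
Definition inf_below (F : T -> R) (p : T) : R := inf (F @` below p).
Definition sup_below (F : T -> R) (p : T) : R := sup (F @` below p).

Lemma below_neq0 p : below p !=set0.
Proof. by exists p; exact: refl_le. Qed.

Section BoundedFunction.
Variables (a b : R) (F : T -> R).
Hypothesis F_itv : forall q, a <= F q <= b.
Local Notation F_itv_below p := (fun q (_ : below p q) => F_itv q).

Lemma inf_below_itv p : a <= inf_below F p <= b.
Proof. exact: inf_image_itv (F_itv_below p) (below_neq0 p). Qed.

Lemma sup_below_itv p : a <= sup_below F p <= b.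
Proof. exact: sup_image_itv (F_itv_below p) (below_neq0 p). Qed.

Lemma inf_below_le p : inf_below F p <= F p.
Proof. by apply: (ge_inf_image (F_itv_below p)); exact: refl_le. Qed.

Lemma le_sup_below p : F p <= sup_below F p.
Proof. by apply: (le_sup_image (F_itv_below p)); exact: refl_le. Qed.

Lemma inf_below_antitone p q : le q p -> inf_below F p <= inf_below F q.
Proof.
move=> qp; apply: le_inf_image (below_neq0 q) _ => r rq.
by apply: (ge_inf_image (F_itv_below p)); exact: trans_le rq qp.
Qed.

Lemma sup_below_monotone p q : le q p -> sup_below F q <= sup_below F p.
Proof.
move=> qp; apply: ge_sup_image (below_neq0 q) _ => r rq.
by apply: (le_sup_image (F_itv_below p)); exact: trans_le rq qp.
Qed.

End BoundedFunction.

Variables (a b : R) (F : T -> R).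
Hypothesis F_itv : forall q, a <= F q <= b.

Let G := inf_below F.
Let W := sup_below G.

Let G_itv q : a <= G q <= b.
Proof. exact: inf_below_itv. Qed.

Let W_itv q : a <= W q <= b.
Proof. exact: sup_below_itv. Qed.

Lemma weak_value_sup_below p : W p = sup_below W p.
Proof.
apply/eqP; rewrite eq_le (le_sup_below W_itv) /=.
apply: ge_sup_image (below_neq0 p) _ => q qp.
exact: sup_below_monotone.
Qed.

Lemma weak_value_sup_inf_below p : W p = sup_below (inf_below W) p.
Proof.
have G_le_inf_W q : G q <= inf_below W q.
  apply: le_inf_image (below_neq0 q) _ => r rq.
  exact: le_trans (inf_below_antitone F_itv rq) (le_sup_below G_itv r).
have inf_W_itv q : a <= inf_below W q <= b by exact: inf_below_itv.
apply/eqP; rewrite eq_le; apply/andP; split.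
  apply: ge_sup_image (below_neq0 p) _ => q qp.
  exact: le_trans (G_le_inf_W q) (le_sup_image (fun r _ => inf_W_itv r) qp).
apply: ge_sup_image (below_neq0 p) _ => q qp.
apply: le_trans (inf_below_le W_itv q) _.
exact: sup_below_monotone.
Qed.

End SupInfBelow.

Section ForcingRange.
Variables (R : realType) (L : signature R).

Lemma tfree_tsubst (s : nat -> term L) t x :
  tfree (tsubst s t) x -> exists2 y, tfree t y & tfree (s y) x.
Proof.
elim: t => [y|//|f ts IH] /=; first by exists y.
by move=> [i /IH [y ty sy]]; exists y => //; exists i.
Qed.

Lemma closed_asubst (s : nat -> term L) a :
  (forall y, afree a y -> closed_term (s y)) -> closed_atom (asubst s a).
Proof.
case: a => [t1 t2|P ts] /= s_cl x.
  by case=> /tfree_tsubst [y ty]; apply: s_cl; [left|right].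
by move=> [i /tfree_tsubst [y ty]]; apply: s_cl; exists i.
Qed.

Variable FP : forcing_property L.

Lemma Fenv_itv (phi : formula L) s p :
  (forall y, ffree phi y -> closed_term (s y)) ->
  0 <= @Fenv _ _ FP phi s p <= 1.
Proof.
elim: phi s p => [a|psi IH|psi IH|psi IHpsi chi IHchi|Phi IH|x psi IH] s p
  s_cl /=.
- exact/fval_range/closed_asubst.
- have /andP[? ?] := inf_image_itv (fun q _ => IH s q s_cl)
    (below_neq0 (@cle_refl _ _ FP) p).
  by apply/andP; split; lra.
- by have /andP[? ?] := IH s p s_cl; apply/andP; split; lra.
- have /andP[? ?] := IHpsi s p (fun y h => s_cl y (or_introl h)).
  have /andP[? ?] := IHchi s p (fun y h => s_cl y (or_intror h)).
  by rewrite ge_min lexx orbT andbT le_min; apply/andP; split; lra.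
- apply: inf_image_itv; last by exists 0%N.
  by move=> n _; apply: IH => y h; apply: s_cl; exists n.
- apply: inf_image_itv; last by exists 0%N.
  move=> c _; apply: IH => y h; rewrite /upd; case: eqP => [_ z //|yx].
  by apply: s_cl; split => // xy; apply: yx.
Qed.

Lemma Fp_itv (phi : formula L) (p : cond FP) :
  sentence phi -> 0 <= Fp p phi <= 1.
Proof. by move=> phi_sent; apply: Fenv_itv => y /phi_sent. Qed.

End ForcingRange.

Theorem lemma2p8 (R : realType) (L : signature R) (LA : formula L -> Prop)
  (hLA : countable_fragment_L LA) (FP : forcing_property L) (p : cond FP)
  (phi : formula L) (hphi : LAC LA phi) (hsent : sentence phi) :
  Fw p phi = sup [set Fw q phi | q in [set q | @cle _ _ FP q p]] /\
  Fw p phi = sup [set inf [set Fw q' phi | q' in [set q' | @cle _ _ FP q' q]]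
                 | q in [set q | @cle _ _ FP q p]].
Proof.
have F_itv (q : cond FP) : 0 <= Fp q phi <= 1 by exact: Fp_itv.
split.
- exact (weak_value_sup_below (@cle_refl _ _ FP) (@cle_trans _ _ FP) F_itv p).
- exact (weak_value_sup_inf_below (@cle_refl _ _ FP) (@cle_trans _ _ FP) F_itv p).
Qed.
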